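(* Let $q$ be a prime power and let $T\in\mathbb F_q[X,Y,Z]$ be a linear PTR polynomial over $\mathbb F_q$, written as $T(X,Y,Z)=Z+XYZ\,M_1(X,Y,Z)+M_2(X,Y)$ with $M_1(X,Y,Z)=\sum_{i,j,k=0}^{q-3}b_{ijk}X^iY^jZ^k$ and $M_2(X,Y)=\sum_{i,j=1}^{q-2}c_{ij}X^iY^j$. Then $$\sum_{i=0}^{q-3}b_{ijk}=\sum_{i=0}^{q-3}b_{jik}$$ for all $0\le j\le q-3$ and $1\le k\le q-3$.
   Context: A PTR polynomial over $\mathbb F_q$ is a reduced polynomial $T\in\mathbb F_q[X,Y,Z]$ (degree less than $q$ in each variable) satisfying: (a) $T(a,0,z)=T(0,b,z)=z$ for all $a,b,z$; (b) $T(x,1,0)=x$ and $T(1,y,0)=y$ for all $x,y$; (c) for all $a,b,c,d$ with $a\neq c$ there is a unique $x$ with $T(x,a,b)=T(x,c,d)$; (d) for all $a,b,c$ there is a unique $z$ with $T(a,b,z)=c$; (e) for all $a,b,c,d$ with $a\neq c$ there is a unique pair $(y,z)$ with $T(a,y,z)=b$ and $T(c,y,z)=d$ (all variables in $\mathbb F_q$). Every PTR polynomial can be written in the displayed form with these degree bounds. Define $x\oplus y=T(1,x,y)$, $x\odot y=T(x,y,0)$; $T$ is linear if $T(x,y,z)=(x\odot y)\oplus z$ for all $x,y,z\in\mathbb F_q$. *)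

From HB Require Import structures.
From mathcomp Require Import all_boot all_order all_algebra all_field.
Set Implicit Arguments. Unset Strict Implicit. Unset Printing Implicit Defensive.
Import GRing.Theory.
Local Open Scope ring_scope.

(* A reduced polynomial T in F_q[X,Y,Z] is identified with the function
   F -> F -> F -> F it induces (reduced polynomials <-> functions). *)

(* The ranges 0..q-3 are written  i < q-2  (empty when q = 2). *)
Definition Tform (F : finFieldType) (b : nat -> nat -> nat -> F) (c : nat -> nat -> F)
  (x y z : F) : F :=
  let q := #|F| in
  z + x * y * z * (\sum_(i < q - 2) \sum_(j < q - 2) \sum_(k < q - 2)
                      b i j k * x ^+ i * y ^+ j * z ^+ k)
    + \sum_(1 <= i < q - 1) \sum_(1 <= j < q - 1) c i j * x ^+ i * y ^+ j.

Definition is_PTR (F : finFieldType) (T : F -> F -> F -> F) : Prop :=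
  [/\ (forall a b z : F, T a 0 z = z /\ T 0 b z = z),
      (forall x y : F, T x 1 0 = x /\ T 1 y 0 = y),
      (forall a b c d : F, a != c -> exists! x : F, T x a b = T x c d),
      (forall a b c : F, exists! z : F, T a b z = c) &
      (forall a b c d : F, a != c ->
         exists! yz : F * F, T a yz.1 yz.2 = b /\ T c yz.1 yz.2 = d)].

Definition PTR_add (F : finFieldType) (T : F -> F -> F -> F) (x y : F) := T 1 x y.
Definition PTR_mul (F : finFieldType) (T : F -> F -> F -> F) (x y : F) := T x y 0.

Definition is_linear_PTR (F : finFieldType) (T : F -> F -> F -> F) : Prop :=
  forall x y z : F, T x y z = PTR_add T (PTR_mul T x y) z.

From mathcomp Require Import all_boot all_order all_algebra all_field.
Set Implicit Arguments. Unset Strict Implicit. Unset Printing Implicit Defensive.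
Local Open Scope ring_scope.
Import GRing.Theory.

(* For a linear PTR, T(y,1,z) = (y ⊙ 1) ⊕ z = y ⊕ z = (1 ⊙ y) ⊕ z = T(1,y,z).
   Subtracting the values at z = 0 leaves yz M1(y,1,z) = yz M1(1,y,z) on F^*,
   and M1(y,1,z), M1(1,y,z) have degree at most q - 3 < |F^*| in y and in z,
   so their coefficients, the two sums of the statement, coincide. *)

Lemma linear_PTR_swap (F : finFieldType) (T : F -> F -> F -> F) :
  is_PTR T -> is_linear_PTR T -> forall y z : F, T y 1 z = T 1 y z.
Proof.
move=> [_ unit_mul _ _ _] lin y z.
by rewrite lin [RHS]lin /PTR_add /PTR_mul; case: (unit_mul y y) => -> ->.
Qed.

Definition trivar (F : finFieldType) n (b : nat -> nat -> nat -> F) (x y z : F) :=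
  \sum_(i < n) \sum_(j < n) \sum_(k < n) b i j k * x ^+ i * y ^+ j * z ^+ k.

Definition bivar (F : finFieldType) n (e : nat -> nat -> F) (y z : F) :=
  \sum_(a < n) (\sum_(k < n) e a k * z ^+ k) * y ^+ a.

Lemma Tform_subr0 (F : finFieldType) b c (x y z : F) :
  Tform b c x y z - Tform b c x y 0 = z + x * y * z * trivar (#|F| - 2)%N b x y z.
Proof. by rewrite /Tform /trivar mulr0 mul0r !add0r addrK. Qed.

Lemma trivar_1yz (F : finFieldType) n b (y z : F) :
  trivar n b 1 y z = bivar n (fun a k => \sum_(i < n) b i a k) y z.
Proof.
rewrite /trivar exchange_big; apply: eq_bigr => a _.
rewrite exchange_big big_distrl; apply: eq_bigr => k _.
rewrite !big_distrl; apply: eq_bigr => i _.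
by rewrite expr1n mulr1 mulrAC.
Qed.

Lemma trivar_y1z (F : finFieldType) n b (y z : F) :
  trivar n b y 1 z = bivar n (fun a k => \sum_(i < n) b a i k) y z.
Proof.
apply: eq_bigr => a _.
rewrite exchange_big big_distrl; apply: eq_bigr => k _.
rewrite !big_distrl; apply: eq_bigr => i _.
by rewrite expr1n mulr1 mulrAC.
Qed.

Lemma eq_coef_on_units (F : finFieldType) n (E1 E2 : nat -> F) :
  (n < #|F|)%N ->
  (forall x, x != 0 -> \sum_(a < n) E1 a * x ^+ a = \sum_(a < n) E2 a * x ^+ a) ->
  forall a, (a < n)%N -> E1 a = E2 a.
Proof.
move=> n_lt_q eqE a a_lt_n.
have size_le (E : nat -> F) : (size (\poly_(i < n) E i) <= #|F|.-1)%N.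
  by rewrite (leq_trans (size_poly _ _)) // -ltnS prednK // (leq_ltn_trans _ n_lt_q).
have /eqP : \poly_(i < n) E1 i - \poly_(i < n) E2 i = 0.
  apply: (@roots_geq_poly_eq0 _ _ (enum (predC1 0))); last 2 first.
  - exact: enum_uniq.
  - rewrite -cardE cardC1; apply: leq_trans (size_polyD _ _) _.
    by rewrite size_polyN geq_max !size_le.
  apply/allP => x; rewrite mem_enum => /eqP x_neq0; apply/rootP.
  by rewrite hornerD hornerN !horner_poly eqE ?subrr //; apply/eqP.
by rewrite subr_eq0 => /eqP/(congr1 (coefp a)); rewrite /= !coef_poly a_lt_n.
Qed.

Lemma eq_coef_bivar_on_units (F : finFieldType) n (e1 e2 : nat -> nat -> F) :
  (n < #|F|)%N ->
  (forall y z, y != 0 -> z != 0 -> bivar n e1 y z = bivar n e2 y z) ->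
  forall a k, (a < n)%N -> (k < n)%N -> e1 a k = e2 a k.
Proof.
move=> n_lt_q eqe a k a_lt_n k_lt_n.
have eq_coef_y z : z != 0 ->
    \sum_(l < n) e1 a l * z ^+ l = \sum_(l < n) e2 a l * z ^+ l.
  move=> z_neq0; apply: (eq_coef_on_units (E1 := fun m => \sum_(l < n) e1 m l * z ^+ l)
                                          (E2 := fun m => \sum_(l < n) e2 m l * z ^+ l)
                                          n_lt_q _ a_lt_n).
  by move=> y y_neq0; apply: eqe.
exact: (eq_coef_on_units n_lt_q eq_coef_y k_lt_n).
Qed.

Theorem corollary4p9 (F : finFieldType) (b : nat -> nat -> nat -> F) (c : nat -> nat -> F) :
  is_PTR (Tform b c) -> is_linear_PTR (Tform b c) ->
  forall j k : nat, (j < #|F| - 2)%N -> (1 <= k < #|F| - 2)%N ->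
    \sum_(i < #|F| - 2) b i j k = \sum_(i < #|F| - 2) b j i k.
Proof.
move=> ptr lin j k j_lt /andP[_ k_lt].
have swap := linear_PTR_swap ptr lin.
have n_lt_q : (#|F| - 2 < #|F|)%N by rewrite ltn_subrL /= (cardD1 0).
apply: (eq_coef_bivar_on_units (e1 := fun a l => \sum_(i < _) b i a l)
                               (e2 := fun a l => \sum_(i < _) b a i l) n_lt_q _ j_lt k_lt).
move=> y z y_neq0 z_neq0.
apply: (mulfI (mulf_neq0 y_neq0 z_neq0)); apply: (addrI z).
have := Tform_subr0 b c 1 y z; have := Tform_subr0 b c y 1 z.
rewrite swap mul1r mulr1 trivar_1yz trivar_y1z => <-.
by rewrite swap.
Qed.
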